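(* Let $G$ be a bounded metric operator in $\mathcal H$ and $A$ a closed densely defined operator in $\mathcal H$. If $A$ is self-adjoint in $\mathcal H(G)$, then $GA$ is symmetric in $\mathcal H$ and $A$ is quasi-Hermitian with respect to $G$. If moreover $G^{-1}$ is bounded, then $A$ is self-adjoint in $\mathcal H(G)$ if and only if $GA$ is self-adjoint in $\mathcal H$.
   Context: A metric operator in $\mathcal H$ is a self-adjoint operator $G$ with $\langle G\xi,\xi\rangle>0$ for all nonzero $\xi\in D(G)$. For bounded metric $G$, $\mathcal H(G)$ is the completion of $\mathcal H$ under $\|\xi\|_G=\|G^{1/2}\xi\|$ with inner product $\langle\xi,\eta\rangle_G=\langle G^{1/2}\xi,G^{1/2}\eta\rangle$; $D(A)$ is dense in $\mathcal H(G)$, and ''$A$ is self-adjoint in $\mathcal H(G)$'' means $A=A^\#$, where $A^\#$ is the adjoint in $\mathcal H(G)$ of $A$ viewed as an operator in $\mathcal H(G)$ with domain $D(A)$. $A$ is quasi-Hermitian with respect to $G$ if $D(A)\subseteq D(G)$ and $\langle A\xi,G\eta\rangle=\langle G\xi,A\eta\rangle$ for all $\xi,\eta\in D(A)$. *)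

From Stdlib Require Import Reals.
Open Scope R_scope.
Set Implicit Arguments.

Record Cx : Type := mkC { Cre : R; Cim : R }.
Definition C0 : Cx := mkC 0 0.
Definition C1 : Cx := mkC 1 0.
Definition Cadd (a b : Cx) : Cx := mkC (Cre a + Cre b) (Cim a + Cim b).
Definition Cmul (a b : Cx) : Cx :=
  mkC (Cre a * Cre b - Cim a * Cim b) (Cre a * Cim b + Cim a * Cre b).
Definition Cconj (a : Cx) : Cx := mkC (Cre a) (- Cim a).

(** Complex inner product spaces (inner product linear in the first argument,
    conjugate-linear in the second). *)
Record InnerSpace : Type := {
  car :> Type;
  vadd : car -> car -> car;
  vzero : car;
  vopp : car -> car;
  vscal : Cx -> car -> car;
  inner : car -> car -> Cx;
  vadd_assoc : forall x y z, vadd x (vadd y z) = vadd (vadd x y) z;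
  vadd_comm : forall x y, vadd x y = vadd y x;
  vadd_zero : forall x, vadd x vzero = x;
  vadd_opp : forall x, vadd x (vopp x) = vzero;
  vscal_addv : forall a x y, vscal a (vadd x y) = vadd (vscal a x) (vscal a y);
  vscal_adds : forall a b x, vscal (Cadd a b) x = vadd (vscal a x) (vscal b x);
  vscal_mul : forall a b x, vscal (Cmul a b) x = vscal a (vscal b x);
  vscal_one : forall x, vscal C1 x = x;
  inner_add_l : forall x y z, inner (vadd x y) z = Cadd (inner x z) (inner y z);
  inner_scal_l : forall a x y, inner (vscal a x) y = Cmul a (inner x y);
  inner_conj : forall x y, inner y x = Cconj (inner x y);
  inner_pos : forall x, 0 <= Cre (inner x x);
  inner_def : forall x, Cre (inner x x) = 0 -> x = vzero
}.

Arguments vadd {_} _ _.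
Arguments vopp {_} _.
Arguments vscal {_} _ _.
Arguments inner {_} _ _.

Definition vsub {X : InnerSpace} (x y : X) : X := vadd x (vopp y).
Definition norm {X : InnerSpace} (x : X) : R := sqrt (Cre (inner x x)).

Definition converges {X : InnerSpace} (u : nat -> X) (x : X) : Prop :=
  forall eps, 0 < eps -> exists N, forall n, (N <= n)%nat -> norm (vsub (u n) x) < eps.
Definition cauchy {X : InnerSpace} (u : nat -> X) : Prop :=
  forall eps, 0 < eps -> exists N, forall n m, (N <= n)%nat -> (N <= m)%nat ->
    norm (vsub (u n) (u m)) < eps.
Definition complete (X : InnerSpace) : Prop :=
  forall u : nat -> X, cauchy u -> exists x, converges u x.

Record HilbertSpace : Type := {
  hs :> InnerSpace;
  hs_complete : complete hs
}.

Definition linear_map {X Y : InnerSpace} (f : X -> Y) : Prop :=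
  forall a x y, f (vadd x y) = vadd (f x) (f y) /\ f (vscal a x) = vscal a (f x).
Definition bounded_map {X Y : InnerSpace} (f : X -> Y) : Prop :=
  exists M, forall x, norm (f x) <= M * norm x.
Definition dense {X : InnerSpace} (D : X -> Prop) : Prop :=
  forall x eps, 0 < eps -> exists y, D y /\ norm (vsub x y) < eps.

Definition linear_op {X : InnerSpace} (D : X -> Prop) (f : X -> X) : Prop :=
  D (vzero X) /\
  (forall x y, D x -> D y -> D (vadd x y) /\ f (vadd x y) = vadd (f x) (f y)) /\
  (forall a x, D x -> D (vscal a x) /\ f (vscal a x) = vscal a (f x)).
Definition closed_op {X : InnerSpace} (D : X -> Prop) (f : X -> X) : Prop :=
  forall (u : nat -> X) x y, (forall n, D (u n)) -> converges u x ->
    converges (fun n => f (u n)) y -> D x /\ f x = y.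

(** Operators as graphs (relations); the graph of (D, f). *)
Definition graph_of {X : InnerSpace} (D : X -> Prop) (f : X -> X) : X -> X -> Prop :=
  fun x y => D x /\ y = f x.
Definition gdom {X : InnerSpace} (T : X -> X -> Prop) : X -> Prop :=
  fun x => exists y, T x y.
Definition adjoint_graph {X : InnerSpace} (T : X -> X -> Prop) : X -> X -> Prop :=
  fun eta zeta => forall xi y, T xi y -> inner y eta = inner xi zeta.
Definition symmetric_op {X : InnerSpace} (T : X -> X -> Prop) : Prop :=
  dense (gdom T) /\ forall eta zeta, T eta zeta -> adjoint_graph T eta zeta.
Definition self_adjoint {X : InnerSpace} (T : X -> X -> Prop) : Prop :=
  dense (gdom T) /\ forall eta zeta, T eta zeta <-> adjoint_graph T eta zeta.

Definition Cpos (z : Cx) : Prop := Cim z = 0 /\ 0 < Cre z.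
Definition bounded_metric {X : InnerSpace} (G : X -> X) : Prop :=
  linear_map G /\ bounded_map G /\ self_adjoint (graph_of (fun _ => True) G) /\
  forall x, x <> vzero X -> Cpos (inner (G x) x).

Definition pos_sqrt {X : InnerSpace} (S G : X -> X) : Prop :=
  linear_map S /\ bounded_map S /\ self_adjoint (graph_of (fun _ => True) S) /\
  (forall x, Cim (inner (S x) x) = 0 /\ 0 <= Cre (inner (S x) x)) /\
  (forall x, S (S x) = G x).

(** (K, J) is a completion H(G) of H w.r.t. <x,y>_G = <G^{1/2}x, G^{1/2}y>:
    J : H -> K linear, with dense range, and <J x, J y>_K = <S x, S y>_H. *)
Definition completion_of {X Y : InnerSpace} (S : X -> X) (J : X -> Y) : Prop :=
  linear_map J /\ (forall x y, inner (J x) (J y) = inner (S x) (S y)) /\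
  dense (fun k : Y => exists x, k = J x).

(** The operator A (domain D, action f) viewed as an operator in H(G),
    with domain D(A) (embedded via J). *)
Definition op_in_completion {X Y : InnerSpace} (D : X -> Prop) (f : X -> X)
  (J : X -> Y) : Y -> Y -> Prop :=
  fun k z => exists xi, D xi /\ k = J xi /\ z = J (f xi).

Definition quasi_hermitian {X : InnerSpace} (D : X -> Prop) (f : X -> X)
  (DG : X -> Prop) (G : X -> X) : Prop :=
  (forall x, D x -> DG x) /\
  forall xi eta, D xi -> D eta -> inner (f xi) (G eta) = inner (G xi) (f eta).

From Pilot Require Import Defs.
From Stdlib Require Import Reals Lra Lia ClassicalEpsilon.
Open Scope R_scope.

(* Since <J u, J v>_K = <G u, v> = <u, G v>, a pair (J eta, J w) lies in the
   adjoint of A in H(G) exactly when (eta, G w) lies in the adjoint of GA in H.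
   This already gives the symmetry of GA, and quasi-Hermiticity follows by
   moving G across the inner product.  When G^{-1} is bounded, the norms of H
   and H(G) are equivalent, so J, having dense range, is onto by completeness of
   H; the correspondence is then a bijection of graphs and transports
   self-adjointness both ways. *)

Lemma Cx_eq (a b : Cx) : Cre a = Cre b -> Cim a = Cim b -> a = b.
Proof. destruct a, b; simpl; intros -> ->; reflexivity. Qed.

Definition Cm1 : Cx := mkC (-1) 0.

Section InnerSpaceFacts.
Variable X : InnerSpace.
Implicit Types x y z a b c : X.

Lemma vadd_0_l x : vadd (vzero X) x = x.
Proof. rewrite vadd_comm; apply vadd_zero. Qed.

Lemma vadd_opp_l x : vadd (vopp x) x = vzero X.
Proof. rewrite vadd_comm; apply vadd_opp. Qed.

Lemma vadd_cancel_l a x y : vadd a x = vadd a y -> x = y.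
Proof.
  intro E.
  rewrite <- (vadd_0_l x), <- (vadd_0_l y), <- (vadd_opp_l a), <- !vadd_assoc, E.
  reflexivity.
Qed.

Lemma vopp_unique x y : vadd x y = vzero X -> y = vopp x.
Proof. intro E. apply (vadd_cancel_l x). rewrite E, vadd_opp. reflexivity. Qed.

Lemma vscal_0 x : vscal Defs.C0 x = vzero X.
Proof.
  assert (E : Cadd Defs.C0 Defs.C0 = Defs.C0) by (apply Cx_eq; simpl; ring).
  pose proof (vscal_adds X Defs.C0 Defs.C0 x) as D. rewrite E in D.
  symmetry. apply (vadd_cancel_l (vscal Defs.C0 x)). rewrite vadd_zero. exact D.
Qed.

Lemma vopp_scal x : vopp x = vscal Cm1 x.
Proof.
  symmetry. apply vopp_unique.
  rewrite <- (vscal_one X x) at 1. rewrite <- vscal_adds.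
  replace (Cadd Defs.C1 Cm1) with Defs.C0 by (apply Cx_eq; simpl; ring).
  apply vscal_0.
Qed.

Lemma vopp_involutive x : vopp (vopp x) = x.
Proof. symmetry. apply vopp_unique, vadd_opp_l. Qed.

Lemma vopp_add x y : vopp (vadd x y) = vadd (vopp x) (vopp y).
Proof. rewrite !vopp_scal. apply vscal_addv. Qed.

Lemma vopp_sub a b : vopp (vsub a b) = vsub b a.
Proof.
  unfold vsub. rewrite vopp_add, vopp_involutive, vadd_comm. reflexivity.
Qed.

Lemma vsub_add_vsub a b c : vadd (vsub a b) (vsub b c) = vsub a c.
Proof.
  unfold vsub. rewrite vadd_assoc, <- (vadd_assoc X a (vopp b) b), vadd_opp_l, vadd_zero.
  reflexivity.
Qed.

Lemma vsub_eq_0 a b : vsub a b = vzero X -> a = b.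
Proof.
  unfold vsub. intro E. apply vopp_unique in E.
  rewrite <- (vopp_involutive a), <- E, vopp_involutive. reflexivity.
Qed.

Lemma inner_add_r x y z : inner x (vadd y z) = Cadd (inner x y) (inner x z).
Proof.
  rewrite inner_conj, inner_add_l, (inner_conj X x y), (inner_conj X x z).
  apply Cx_eq; simpl; ring.
Qed.

Lemma inner_scal_r (k : Cx) x y : inner x (vscal k y) = Cmul (Cconj k) (inner x y).
Proof.
  rewrite inner_conj, inner_scal_l, (inner_conj X x y).
  apply Cx_eq; simpl; ring.
Qed.

Lemma inner_0_r a : inner a (vzero X) = Defs.C0.
Proof. rewrite <- (vscal_0 a), inner_scal_r. apply Cx_eq; simpl; ring. Qed.

Definition sqnorm x : R := Cre (inner x x).

Lemma sqnorm_ge0 x : 0 <= sqnorm x.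
Proof. apply inner_pos. Qed.

Lemma sqnorm_add_scal a b t :
  sqnorm (vadd a (vscal (mkC t 0) b))
  = sqnorm a + 2 * t * Cre (inner a b) + t * t * sqnorm b.
Proof.
  unfold sqnorm.
  rewrite inner_add_l, !inner_add_r, !inner_scal_l, !inner_scal_r, ?inner_scal_l.
  simpl. rewrite (inner_conj X a b). simpl. ring.
Qed.

Lemma sqnorm_add a b : sqnorm (vadd a b) = sqnorm a + 2 * Cre (inner a b) + sqnorm b.
Proof. rewrite <- (vscal_one X b) at 1. unfold Defs.C1. rewrite sqnorm_add_scal. ring. Qed.

Lemma cauchy_schwarz_re a b :
  Cre (inner a b) * Cre (inner a b) <= sqnorm a * sqnorm b.
Proof.
  destruct (Req_dec (sqnorm b) 0) as [Hb|Hb].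
  - apply inner_def in Hb. rewrite Hb, inner_0_r. simpl.
    pose proof (sqnorm_ge0 a). pose proof (sqnorm_ge0 (vzero X)). nra.
  - pose proof (sqnorm_ge0 b). set (B := Cre (inner a b)).
    (* minimise t |-> sqnorm (a + t b) at t = - B / sqnorm b *)
    pose proof (sqnorm_ge0 (vadd a (vscal (mkC (- B / sqnorm b) 0) b))) as D.
    rewrite sqnorm_add_scal in D. fold B in D.
    replace (sqnorm a + 2 * (- B / sqnorm b) * B + - B / sqnorm b * (- B / sqnorm b) * sqnorm b)
      with (sqnorm a - B * B / sqnorm b) in D by (field; lra).
    apply Rmult_le_reg_r with (/ sqnorm b); [apply Rinv_0_lt_compat; lra|].
    replace (sqnorm a * sqnorm b * / sqnorm b) with (sqnorm a) by (field; lra).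
    unfold Rdiv in D. lra.
Qed.

Lemma norm_ge0 x : 0 <= norm x.
Proof. apply sqrt_pos. Qed.

Lemma norm_sqr x : norm x * norm x = sqnorm x.
Proof. apply sqrt_sqrt, sqnorm_ge0. Qed.

Lemma norm_0 : norm (vzero X) = 0.
Proof. unfold norm. rewrite inner_0_r. apply sqrt_0. Qed.

Lemma norm_eq_0 x : norm x = 0 -> x = vzero X.
Proof.
  intro E. apply inner_def. pose proof (norm_sqr x) as D.
  unfold sqnorm in D. rewrite E in D. lra.
Qed.

Lemma norm_triangle a b : norm (vadd a b) <= norm a + norm b.
Proof.
  pose proof (norm_sqr a) as Ea. pose proof (norm_sqr b) as Eb.
  pose proof (norm_sqr (vadd a b)) as Eab. rewrite sqnorm_add in Eab.
  pose proof (norm_ge0 a). pose proof (norm_ge0 b). pose proof (norm_ge0 (vadd a b)).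
  assert (Cre (inner a b) <= norm a * norm b).
  { destruct (Rle_dec (Cre (inner a b)) 0); [nra|].
    apply Rsqr_incr_0_var; [|nra]. unfold Rsqr.
    replace (norm a * norm b * (norm a * norm b)) with (sqnorm a * sqnorm b)
      by (rewrite <- Ea, <- Eb; ring).
    apply cauchy_schwarz_re. }
  apply Rsqr_incr_0_var; unfold Rsqr; nra.
Qed.

Lemma norm_opp x : norm (vopp x) = norm x.
Proof.
  unfold norm. rewrite vopp_scal, inner_scal_l, inner_scal_r. simpl.
  f_equal. ring.
Qed.

Lemma norm_sub_sym a b : norm (vsub a b) = norm (vsub b a).
Proof. rewrite <- vopp_sub, norm_opp. reflexivity. Qed.

Lemma norm_sub_triangle a b c : norm (vsub a c) <= norm (vsub a b) + norm (vsub b c).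
Proof. rewrite <- (vsub_add_vsub a b c). apply norm_triangle. Qed.

End InnerSpaceFacts.

Arguments norm_0 {X}.

Lemma linear_map_sub {X Y : InnerSpace} (f : X -> Y) : linear_map f ->
  forall x y, f (vsub x y) = vsub (f x) (f y).
Proof.
  intros L x y. unfold vsub. destruct (L Defs.C1 x (vopp y)) as [-> _].
  rewrite !vopp_scal. destruct (L Cm1 y y) as [_ ->]. reflexivity.
Qed.

Lemma bounded_map_pos {X Y : InnerSpace} (f : X -> Y) : bounded_map f ->
  exists M, 0 < M /\ forall x, norm (f x) <= M * norm x.
Proof.
  intros [M HM]. exists (Rmax M 1). split; [pose proof (Rmax_r M 1); lra|].
  intro x. eapply Rle_trans; [apply HM|].
  apply Rmult_le_compat_r; [apply norm_ge0 | apply Rmax_l].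
Qed.

Lemma bounded_below_injective {X Y : InnerSpace} (f : X -> Y) (c : R) :
  linear_map f -> (forall x, norm x <= c * norm (f x)) ->
  forall x y, f x = f y -> x = y.
Proof.
  intros L Hc x y E. apply vsub_eq_0, norm_eq_0.
  pose proof (Hc (vsub x y)) as D.
  rewrite linear_map_sub, E in D by exact L. unfold vsub in D |- *.
  rewrite vadd_opp, norm_0, Rmult_0_r in D.
  pose proof (norm_ge0 _ (vadd x (vopp y))). lra.
Qed.

Lemma inv_INR_S_antitone (N n : nat) : (N <= n)%nat -> / (INR n + 1) <= / (INR N + 1).
Proof.
  intro h. apply Rinv_le_contravar; [pose proof (pos_INR N); lra|].
  apply le_INR in h; lra.
Qed.

Lemma inv_INR_S_small (e : R) : 0 < e -> exists N : nat, / (INR N + 1) < e.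
Proof.
  intro he. destruct (archimed_cor1 e he) as [N [h1 h2]]. exists N.
  eapply Rle_lt_trans; [|exact h1]. apply Rinv_le_contravar; [apply lt_0_INR; lia | lra].
Qed.

Section DenseRangeSurjective.
Variables (X : HilbertSpace) (Y : InnerSpace) (f : X -> Y) (M c : R).
Hypotheses (f_linear : linear_map f) (M_pos : 0 < M) (c_pos : 0 < c)
  (f_bounded : forall x, norm (f x) <= M * norm x)
  (f_bounded_below : forall x, norm x <= c * norm (f x)).

Lemma dense_range_approx_seq (k : Y) :
  dense (fun k : Y => exists x, k = f x) ->
  exists u : nat -> X, forall n, norm (vsub k (f (u n))) < / (INR n + 1).
Proof.
  intro Hd.
  assert (Hx : forall n : nat, exists x, norm (vsub k (f x)) < / (INR n + 1)).
  { intro n. destruct (Hd k (/ (INR n + 1))) as [y [[x ->] hx]];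
      [apply Rinv_0_lt_compat; pose proof (pos_INR n); lra | eauto]. }
  exists (fun n => proj1_sig (constructive_indefinite_description _ (Hx n))).
  intro n. exact (proj2_sig (constructive_indefinite_description _ (Hx n))).
Qed.

Lemma approx_seq_cauchy (k : Y) (u : nat -> X) :
  (forall n, norm (vsub k (f (u n))) < / (INR n + 1)) -> cauchy u.
Proof.
  intros Hu eps He.
  destruct (inv_INR_S_small (eps / (2 * c))) as [N HN];
    [apply Rdiv_lt_0_compat; lra|].
  exists N. intros n m hn hm.
  eapply Rle_lt_trans; [apply f_bounded_below|].
  rewrite linear_map_sub by exact f_linear.
  pose proof (norm_sub_triangle _ (f (u n)) k (f (u m))) as T.
  rewrite (norm_sub_sym _ (f (u n)) k) in T.
  pose proof (Hu n). pose proof (Hu m).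
  pose proof (inv_INR_S_antitone N n hn). pose proof (inv_INR_S_antitone N m hm).
  replace eps with (c * (2 * (eps / (2 * c)))) by (field; lra).
  apply Rmult_lt_compat_l; lra.
Qed.

Lemma approx_seq_limit (k : Y) (u : nat -> X) (x : X) :
  (forall n, norm (vsub k (f (u n))) < / (INR n + 1)) -> converges u x -> f x = k.
Proof.
  intros Hu Hconv.
  assert (small : forall e, 0 < e -> norm (vsub (f x) k) < e).
  { intros e he.
    destruct (Hconv (e / (2 * M))) as [N1 HN1]; [apply Rdiv_lt_0_compat; lra|].
    destruct (inv_INR_S_small (e / 2)) as [N2 HN2]; [lra|].
    set (n := Nat.max N1 N2).
    pose proof (HN1 n (Nat.le_max_l _ _)) as h1.
    pose proof (inv_INR_S_antitone N2 n (Nat.le_max_r _ _)).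
    pose proof (Hu n).
    pose proof (norm_sub_triangle _ (f x) (f (u n)) k) as T.
    rewrite <- linear_map_sub in T by exact f_linear.
    rewrite (norm_sub_sym _ (f (u n)) k) in T.
    pose proof (f_bounded (vsub x (u n))) as h4. rewrite norm_sub_sym in h4.
    apply Rmult_lt_compat_l with (r := M) in h1; [|lra].
    replace (M * (e / (2 * M))) with (e / 2) in h1 by (field; lra).
    lra. }
  apply vsub_eq_0, norm_eq_0.
  pose proof (norm_ge0 _ (vsub (f x) k)).
  destruct (Req_dec (norm (vsub (f x) k)) 0) as [E|E]; [exact E|].
  specialize (small (norm (vsub (f x) k))). lra.
Qed.

Lemma dense_range_surjective :
  dense (fun k : Y => exists x, k = f x) -> forall k, exists x, k = f x.
Proof.
  intros Hd k. destruct (dense_range_approx_seq k Hd) as [u Hu].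
  destruct (hs_complete X (approx_seq_cauchy k u Hu)) as [x Hx].
  exists x. symmetry. exact (approx_seq_limit k u x Hu Hx).
Qed.

End DenseRangeSurjective.

Lemma self_adjoint_everywhere_inner {X : InnerSpace} (T : X -> X) :
  self_adjoint (graph_of (fun _ => True) T) -> forall x y, inner (T x) y = inner x (T y).
Proof.
  intros [_ h] x y.
  exact (proj1 (h y (T y)) (conj I eq_refl) x (T x) (conj I eq_refl)).
Qed.

Lemma dense_gdom_graph_of {X : InnerSpace} (D : X -> Prop) (f : X -> X) :
  dense D -> dense (gdom (graph_of D f)).
Proof.
  intros Hd x eps he. destruct (Hd x eps he) as [y [Dy hy]].
  exists y. split; [exists (f y); split; auto | exact hy].
Qed.

Lemma self_adjoint_of_symmetric {X : InnerSpace} (T : X -> X -> Prop) :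
  symmetric_op T -> (forall eta zeta, adjoint_graph T eta zeta -> T eta zeta) ->
  self_adjoint T.
Proof. intros [Hd Hs] Hc. split; [exact Hd | split; auto]. Qed.

Lemma symmetric_quasi_hermitian {X : InnerSpace} (G : X -> X) (D : X -> Prop) (f : X -> X) :
  self_adjoint (graph_of (fun _ => True) G) ->
  symmetric_op (graph_of D (fun x => G (f x))) ->
  quasi_hermitian D f (fun _ => True) G.
Proof.
  intros Gsa [_ Hs]. split; [auto|]. intros xi eta Dxi Deta.
  rewrite <- (self_adjoint_everywhere_inner G Gsa (f xi) eta),
    (self_adjoint_everywhere_inner G Gsa xi (f eta)).
  exact (Hs eta _ (conj Deta eq_refl) xi _ (conj Dxi eq_refl)).
Qed.

Section MetricCompletion.
Variables (X Y : InnerSpace) (G S : X -> X) (J : X -> Y) (D : X -> Prop) (A : X -> X).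
Hypotheses (S_sqrt : pos_sqrt S G) (J_completion : completion_of S J).

Lemma completion_inner_l u v : inner (J u) (J v) = inner (G u) v.
Proof.
  destruct S_sqrt as [_ [_ [Ssa [_ SS]]]]. destruct J_completion as [_ [Jin _]].
  rewrite Jin, <- SS. symmetry. apply self_adjoint_everywhere_inner, Ssa.
Qed.

Lemma completion_inner_r u v : inner (J u) (J v) = inner u (G v).
Proof.
  destruct S_sqrt as [_ [_ [Ssa [_ SS]]]]. destruct J_completion as [_ [Jin _]].
  rewrite Jin, <- SS. apply self_adjoint_everywhere_inner, Ssa.
Qed.

Lemma norm_completion x : norm (J x) = norm (S x).
Proof. destruct J_completion as [_ [Jin _]]. unfold norm. rewrite Jin. reflexivity. Qed.

Lemma completion_adjoint_iff eta w :
  adjoint_graph (op_in_completion D A J) (J eta) (J w) <->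
  adjoint_graph (graph_of D (fun x => G (A x))) eta (G w).
Proof.
  split.
  - intros Hadj xi y [Dxi ->].
    pose proof (Hadj (J xi) (J (A xi)) (ex_intro _ xi (conj Dxi (conj eq_refl eq_refl)))) as E.
    rewrite completion_inner_l, completion_inner_r in E. exact E.
  - intros Hadj k z [xi [Dxi [-> ->]]].
    rewrite completion_inner_l, completion_inner_r. apply Hadj. split; auto.
Qed.

Lemma completion_self_adjoint_symmetric :
  dense D -> self_adjoint (op_in_completion D A J) ->
  symmetric_op (graph_of D (fun x => G (A x))).
Proof.
  intros Hd [_ Hsa]. split; [apply dense_gdom_graph_of, Hd|].
  intros eta zeta [Deta ->]. apply completion_adjoint_iff, Hsa.
  exists eta. auto.
Qed.

Lemma completion_dense_domain (M : R) :
  0 < M -> (forall x, norm (J x) <= M * norm x) -> (forall k, exists x, k = J x) ->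
  dense D -> dense (gdom (op_in_completion D A J)).
Proof.
  intros HM Jup J_surj Hd k eps he. destruct (J_surj k) as [x ->].
  destruct (Hd x (eps / M)) as [y [Dy hy]]; [apply Rdiv_lt_0_compat; lra|].
  exists (J y). split; [exists (J (A y)), y; auto|].
  rewrite <- linear_map_sub by apply J_completion.
  eapply Rle_lt_trans; [apply Jup|].
  replace eps with (M * (eps / M)) by (field; lra).
  apply Rmult_lt_compat_l; assumption.
Qed.

Lemma completion_norm_equivalent (Ginv : X -> X) :
  bounded_map Ginv -> (forall x, Ginv (G x) = x) ->
  exists M c, 0 < M /\ 0 < c /\
    (forall x, norm (J x) <= M * norm x) /\ (forall x, norm x <= c * norm (J x)).
Proof.
  intros GiB GiK. destruct S_sqrt as [_ [SB [_ [_ SS]]]].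
  destruct (bounded_map_pos S SB) as [Ms [HMs Sup]].
  destruct (bounded_map_pos Ginv GiB) as [Mg [HMg Giup]].
  exists Ms, (Mg * Ms). repeat split; [lra | nra | |].
  - intro x. rewrite norm_completion. apply Sup.
  - intro x. rewrite norm_completion, <- (GiK x) at 1.
    eapply Rle_trans; [apply Giup|]. rewrite Rmult_assoc, <- SS.
    apply Rmult_le_compat_l; [lra | apply Sup].
Qed.

Section BoundedInverse.
Variable Ginv : X -> X.
Hypotheses (G_bij : forall x, Ginv (G x) = x /\ G (Ginv x) = x)
  (J_inj : forall x y, J x = J y -> x = y) (J_surj : forall k, exists x, k = J x).

Lemma completion_self_adjoint_GA :
  dense D -> self_adjoint (op_in_completion D A J) ->
  self_adjoint (graph_of D (fun x => G (A x))).
Proof.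
  intros Hd Hsa. apply self_adjoint_of_symmetric;
    [apply completion_self_adjoint_symmetric; assumption|].
  intros eta zeta Hadj. rewrite <- (proj2 (G_bij zeta)) in Hadj.
  apply completion_adjoint_iff, (proj2 Hsa) in Hadj.
  destruct Hadj as [xi [Dxi [E1 E2]]].
  apply J_inj in E1. apply J_inj in E2. subst xi.
  split; [exact Dxi|]. rewrite <- E2. symmetry. apply G_bij.
Qed.

Lemma GA_self_adjoint_completion :
  dense (gdom (op_in_completion D A J)) -> self_adjoint (graph_of D (fun x => G (A x))) ->
  self_adjoint (op_in_completion D A J).
Proof.
  intros Hd [_ Hsa]. split; [exact Hd|]. intros k z.
  destruct (J_surj k) as [eta ->]. destruct (J_surj z) as [w ->].
  rewrite completion_adjoint_iff, <- Hsa. split.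
  - intros [xi [Dxi [E1 E2]]]. apply J_inj in E1. apply J_inj in E2. subst.
    split; auto.
  - intros [Deta E]. exists eta. split; [exact Deta|].
    split; [reflexivity|]. f_equal.
    rewrite <- (proj1 (G_bij w)), E. apply G_bij.
Qed.

End BoundedInverse.
End MetricCompletion.

Theorem proposition5p11 (H : HilbertSpace) (G : H -> H)
  (DA : H -> Prop) (A : H -> H) (S : H -> H) (K : HilbertSpace) (J : H -> K) :
  bounded_metric G ->
  linear_op DA A -> dense DA -> closed_op DA A ->
  pos_sqrt S G -> completion_of S J ->
  (self_adjoint (op_in_completion DA A J) ->
     symmetric_op (graph_of DA (fun x => G (A x))) /\
     quasi_hermitian DA A (fun _ => True) G) /\
  ((exists Ginv : H -> H, linear_map Ginv /\ bounded_map Ginv /\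
      forall x, Ginv (G x) = x /\ G (Ginv x) = x) ->
   (self_adjoint (op_in_completion DA A J) <->
    self_adjoint (graph_of DA (fun x => G (A x))))).
Proof.
  intros [_ [_ [Gsa _]]] _ Hd _ HS HJ. split.
  - intro Hsa.
    pose proof (completion_self_adjoint_symmetric _ _ _ _ _ _ _ HS HJ Hd Hsa) as Hsym.
    split; [exact Hsym | exact (symmetric_quasi_hermitian G DA A Gsa Hsym)].
  - intros [Ginv [_ [GiB G_bij]]].
    destruct (completion_norm_equivalent _ _ _ _ _ HS HJ Ginv GiB (fun x => proj1 (G_bij x)))
      as [M [c [HM [Hc [Jup Jlo]]]]].
    pose proof HJ as [JL [_ Jd]].
    pose proof (bounded_below_injective J c JL Jlo) as J_inj.
    pose proof (dense_range_surjective H K J M c JL HM Hc Jup Jlo Jd) as J_surj.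
    split.
    + exact (completion_self_adjoint_GA _ _ _ _ _ _ _ HS HJ Ginv G_bij J_inj Hd).
    + apply (GA_self_adjoint_completion _ _ _ _ _ _ _ HS HJ Ginv G_bij J_inj J_surj).
      exact (completion_dense_domain _ _ _ _ _ _ HJ M HM Jup J_surj Hd).
Qed.
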